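(* Let $H:\mathbb{R}^n\to\mathbb{R}$ be $\mu_H$-strongly convex with $\mu_H>0$, let $f^i_{j_i}:\mathbb{R}^n\to\mathbb{R}$ ($i\in[S]$, $j_i\in[I_i]$) be convex, and let $X\subset\mathbb{R}^n$ be nonempty, compact and convex. Let $m:=\sum_{i=1}^S I_i$, $F:=\sum_{i=1}^S\sum_{j_i=1}^{I_i} f^i_{j_i}$, and let $x^*_H$ be the unique solution of the bilevel problem: minimize $H(x)$ subject to $x\in\operatorname{argmin}_{y\in X}F(y)$. Let $\{\gamma_k\}_{k=1}^\infty$, $\{\lambda_k\}_{k=1}^\infty$ satisfy: (i) both are nonincreasing sequences of positive reals with $\gamma_1\lambda_1\mu_H\le 2m$; (ii) $\sum_{k=1}^\infty\gamma_k\lambda_k=\infty$, $\sum_{k=1}^\infty\frac{1}{\gamma_{k+1}\lambda_{k+1}}\big(1-\frac{\lambda_k}{\lambda_{k+1}}\big)^2<\infty$, and $\sum_{k=1}^\infty\gamma_k^2<\infty$; (iii) $\frac{1}{\gamma_{k+1}^2\lambda_{k+1}^2}\big(1-\frac{\lambda_k}{\lambda_{k+1}}\big)^2\to0$, $\frac{\gamma_k}{\lambda_k}\to0$, and $\lambda_k\to0$. Let $\{x_k\}_{k=1}^\infty$ be a sequence generated by FISM (described in the context) with these stepsizes. Then $\{x_k\}_{k=1}^\infty$ converges to $x^*_H$.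
   Context: Notation: $[s]:=\{1,\dots,s\}$; $P_X$ is the Euclidean metric projection onto $X$; $\partial$ denotes the convex subdifferential. FISM (Federated Incremental Subgradient Method): given a starting point $x_1\in\mathbb{R}^n$ and positive stepsizes $\{\gamma_k\},\{\lambda_k\}$, for $k=1,2,\dots$: pick $\mathcal{H}_k\in\partial H(x_k)$; for every client $i\in[S]$ set $x^i_{k,1}=x_k$ and for $j_i=1,\dots,I_i$ pick $g^i_{k,j_i}\in\partial f^i_{j_i}(x^i_{k,j_i})$ and set $x^i_{k,j_i+1}=P_X\big[x^i_{k,j_i}-\gamma_k g^i_{k,j_i}-\frac{\gamma_k\lambda_k}{m}\mathcal{H}_k\big]$; then set $x^i_k=x^i_{k,I_i+1}$ and $x_{k+1}=\frac1S\sum_{i=1}^S x^i_k$. *)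

From HB Require Import structures.
From mathcomp Require Import all_boot all_order all_algebra.
From mathcomp Require Import all_classical all_reals all_analysis.
Set Implicit Arguments. Unset Strict Implicit. Unset Printing Implicit Defensive.
Import Order.TTheory GRing.Theory Num.Theory.
Import numFieldNormedType.Exports.
Local Open Scope classical_set_scope.
Local Open Scope ring_scope.

Section Defs.
Variables (R : realType) (n : nat).
Notation vec := 'rV[R]_n.

Definition dotv (u v : vec) : R := \sum_(j < n) u ord0 j * v ord0 j.
Definition sqnorm (u : vec) : R := dotv u u.

Definition convex_set_v (X : set vec) : Prop :=
  forall x y (t : R), X x -> X y -> 0 <= t <= 1 -> X (t *: x + (1 - t) *: y).

Definition convex_fun (f : vec -> R) : Prop :=
  forall x y (t : R), 0 <= t <= 1 ->
    f (t *: x + (1 - t) *: y) <= t * f x + (1 - t) * f y.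

Definition strongly_convex (mu : R) (f : vec -> R) : Prop :=
  forall x y (t : R), 0 <= t <= 1 ->
    f (t *: x + (1 - t) *: y)
      <= t * f x + (1 - t) * f y - mu / 2 * t * (1 - t) * sqnorm (x - y).

Definition subgrad (f : vec -> R) (x g : vec) : Prop :=
  forall y, f x + dotv g (y - x) <= f y.

Definition is_proj (X : set vec) (z p : vec) : Prop :=
  X p /\ forall y, X y -> sqnorm (z - p) <= sqnorm (z - y).

Definition argmin_on (X : set vec) (F : vec -> R) (x : vec) : Prop :=
  X x /\ forall y, X y -> F x <= F y.

Definition bilevel_solution (X : set vec) (F H : vec -> R) (x : vec) : Prop :=
  argmin_on [set y | argmin_on X F y] H x.

(* {x_k} (indexed from 0, x 0 = x_1) is generated by FISM with stepsizes
   gamma, lambda (gamma k = gamma_{k+1}, lambda k = lambda_{k+1}), clients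
   i : 'I_S with component functions f i j, j < I i (j = j_i - 1).
   Hk k = \mathcal H_k, g k i j = g^i_{k,j+1}, y k i j = x^i_{k,j+1}. *)
Definition FISM_sequence (S : nat) (I : 'I_S -> nat)
    (f : 'I_S -> nat -> vec -> R) (H : vec -> R) (X : set vec)
    (gamma lambda : nat -> R) (x : nat -> vec) : Prop :=
  let m : R := (\sum_(i < S) I i)%:R in
  exists (Hk : nat -> vec) (g y : nat -> 'I_S -> nat -> vec),
    forall k,
      subgrad H (x k) (Hk k) /\
      (forall i, y k i 0%N = x k) /\
      (forall i (j : nat), (j < I i)%N ->
          subgrad (f i j) (y k i j) (g k i j) /\
          is_proj X (y k i j - gamma k *: g k i j
                      - (gamma k * lambda k / m) *: Hk k) (y k i j.+1)) /\
      x k.+1 = S%:R^-1 *: \sum_(i < S) y k i (I i).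

End Defs.

From HB Require Import structures.
From mathcomp Require Import all_boot all_order all_algebra.
From mathcomp Require Import all_classical all_reals all_analysis.
From mathcomp Require Import ring lra.
Import Order.TTheory GRing.Theory Num.Theory.
Import numFieldNormedType.Exports.
Local Open Scope classical_set_scope.
Local Open Scope ring_scope.
Set Implicit Arguments. Unset Strict Implicit. Unset Printing Implicit Defensive.

(* Let [a_k := |x_k - x_H|^2].  Projections onto [X] do not increase distances
   to points of [X], and all subgradients are bounded on the compact set [X];
   hence one round of FISM satisfies
     [a_(k+1) <= a_k - (2 gamma_k / S) (F x_k - F x_H)
                     - (2 gamma_k lambda_k / S) <H_k, x_k - x_H> + C gamma_k^2],
   the drift of the inner iterates away from [x_k] being absorbed in
   [C gamma_k^2] and the average over the clients being handled by Jensen's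
   inequality.  Strong convexity bounds [<H_k, x_k - x_H>] below by
   [H x_k - H x_H + mu_H a_k / 4], and since [x_H] minimizes [H] over the
   minimizers of [F] on the compact set [X],
   [F x_k - F x_H + lambda (H x_k - H x_H) >= - lambda eps] for all small
   [lambda].  As [gamma_k / lambda_k -> 0], this gives eventually
   [a_(k+1) <= (1 - t_k) a_k + t_k eta / 2] with
   [t_k = mu_H gamma_k lambda_k / (2 S)], and [sum t_k = +oo] then forces
   [a_k <= eta] eventually. *)

(** * Inner products and norms on row vectors *)

Section Euclidean.
Variables (R : realType) (n : nat).
Notation vec := 'rV[R]_n.
Implicit Types (u v w : vec) (a : R).

Lemma dotvC u v : dotv u v = dotv v u.
Proof. by apply: eq_bigr => j _; rewrite mulrC. Qed.

Lemma dotvDl u v w : dotv (u + v) w = dotv u w + dotv v w.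
Proof. by rewrite /dotv -big_split; apply: eq_bigr => j _; rewrite !mxE mulrDl. Qed.

Lemma dotvDr u v w : dotv u (v + w) = dotv u v + dotv u w.
Proof. by rewrite dotvC dotvDl !(dotvC u). Qed.

Lemma dotvZl a u v : dotv (a *: u) v = a * dotv u v.
Proof. by rewrite /dotv mulr_sumr; apply: eq_bigr => j _; rewrite !mxE mulrA. Qed.

Lemma dotvZr a u v : dotv u (a *: v) = a * dotv u v.
Proof. by rewrite dotvC dotvZl dotvC. Qed.

Lemma dotvNl u v : dotv (- u) v = - dotv u v.
Proof. by rewrite -scaleN1r dotvZl mulN1r. Qed.

Lemma dotvNr u v : dotv u (- v) = - dotv u v.
Proof. by rewrite dotvC dotvNl dotvC. Qed.

Lemma sqnorm_ge0 u : 0 <= sqnorm u.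
Proof. by apply: sumr_ge0 => j _; rewrite -expr2 sqr_ge0. Qed.

Lemma sqnorm0 : sqnorm (0 : vec) = 0.
Proof. by rewrite /sqnorm /dotv big1 // => j _; rewrite mxE mul0r. Qed.

Lemma sqnormD u v : sqnorm (u + v) = sqnorm u + 2 * dotv u v + sqnorm v.
Proof. by rewrite /sqnorm !dotvDl !dotvDr (dotvC v u); ring. Qed.

Lemma sqnormN u : sqnorm (- u) = sqnorm u.
Proof. by rewrite /sqnorm dotvNl dotvNr opprK. Qed.

Lemma sqnormB u v : sqnorm (u - v) = sqnorm u - 2 * dotv u v + sqnorm v.
Proof. by rewrite sqnormD sqnormN dotvNr; ring. Qed.

Lemma sqnormZ a u : sqnorm (a *: u) = a ^+ 2 * sqnorm u.
Proof. by rewrite /sqnorm dotvZl dotvZr mulrA -expr2. Qed.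

Lemma sqnormBC u v : sqnorm (u - v) = sqnorm (v - u).
Proof. by rewrite -sqnormN opprB. Qed.

Lemma dotv_ge_sqnorm u v : - (sqnorm u + sqnorm v) <= 2 * dotv u v.
Proof. by have := sqnorm_ge0 (u + v); rewrite sqnormD; lra. Qed.

Lemma dotv_le_sqnorm u v : 2 * dotv u v <= sqnorm u + sqnorm v.
Proof. by have := sqnorm_ge0 (u - v); rewrite sqnormB; lra. Qed.

Lemma sqnormD_le u v : sqnorm (u + v) <= 2 * sqnorm u + 2 * sqnorm v.
Proof. by rewrite sqnormD; have := dotv_le_sqnorm u v; lra. Qed.

Lemma sqr_coord_le_sqnorm u j : u ord0 j ^+ 2 <= sqnorm u.
Proof.
rewrite /sqnorm /dotv (bigD1 j) //= expr2 lerDl.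
by apply: sumr_ge0 => i _; rewrite -expr2 sqr_ge0.
Qed.

(* On row vectors [`|_|] is the maximum norm. *)
Lemma normr_coord_le u j : `|u ord0 j| <= `|u|.
Proof.
rewrite [leRHS]/Num.Def.normr /= mx_normrE; apply/bigmax_geP; right.
by exists (ord0, j).
Qed.

Lemma normr_rV_le u e : 0 <= e -> (forall j, `|u ord0 j| <= e) -> `|u| <= e.
Proof.
move=> e0 ue; rewrite [leLHS]/Num.Def.normr /= mx_normrE.
by apply: bigmax_le => // -[i j] _ /=; rewrite (ord1 i).
Qed.

Lemma sqr_normr_le_sqnorm u : `|u| ^+ 2 <= sqnorm u.
Proof.
have [u0|/mx_norm_neq0 [[i j] /= uij]] := eqVneq (mx_norm u) 0.
  by rewrite [`|u|]u0 expr0n sqnorm_ge0.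
by rewrite [`|u|]uij real_normK ?num_real // (ord1 i) sqr_coord_le_sqnorm.
Qed.

Lemma sqnorm_le_sqr_normr u : sqnorm u <= n%:R * `|u| ^+ 2.
Proof.
have -> : n%:R * `|u| ^+ 2 = \sum_(j < n) `|u| ^+ 2.
  by rewrite sumr_const card_ord mulr_natl.
apply: ler_sum => j _.
rewrite -expr2 -real_normK ?num_real // lerXn2r ?nnegrE //.
exact: normr_coord_le.
Qed.

End Euclidean.

Lemma cvg_sqnorm_to0 (R : realType) (n : nat) (u : nat -> 'rV[R]_n) (p : 'rV[R]_n) :
  (forall eta, 0 < eta -> \forall k \near \oo, sqnorm (u k - p) <= eta) ->
  u @ \oo --> p.
Proof.
move=> u_near; apply/cvgrPdist_le => e e_gt0.
apply: filterS (u_near _ (exprn_gt0 2 e_gt0)) => k uk.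
rewrite -(ler_pXn2r (isT : (0 < 2)%N)) ?nnegrE ?normr_ge0 ?(ltW e_gt0) //.
by apply: le_trans (sqr_normr_le_sqnorm _) _; rewrite sqnormBC.
Qed.

(** * Projections and convexity *)

Section Convexity.
Variables (R : realType) (n : nat).
Notation vec := 'rV[R]_n.
Implicit Types (u v w : vec) (X : set vec) (f : vec -> R).

Lemma proj_obtuse X z p w : convex_set_v X -> is_proj X z p -> X w ->
  dotv (z - p) (w - p) <= 0.
Proof.
move=> cX [Xp pmin] Xw; set d := dotv _ _; set s := sqnorm (w - p).
have s0 : 0 <= s by exact: sqnorm_ge0.
have le_ts t : 0 < t -> t <= 1 -> 2 * d <= t * s.
  move=> t0 t1; have := pmin _ (cX w p t Xw Xp (ltac:(by rewrite (ltW t0) t1))).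
  have -> : z - (t *: w + (1 - t) *: p) = (z - p) - t *: (w - p).
    by apply/rowP => j; rewrite !mxE; ring.
  rewrite (sqnormB (z - p)) sqnormZ dotvZr -/d -/s => h.
  by rewrite -(ler_pM2l t0); nra.
rewrite leNgt; apply/negP => d0.
have t0 : 0 < d / (d + s) by rewrite divr_gt0 //; lra.
have t1 : d / (d + s) <= 1 by rewrite ler_pdivrMr ?mul1r; lra.
have := le_ts _ t0 t1; rewrite mulrAC ler_pdivlMr; nra.
Qed.

Lemma proj_sqdist_le X z p w : convex_set_v X -> is_proj X z p -> X w ->
  sqnorm (p - w) <= sqnorm (z - w).
Proof.
move=> cX pP Xw; have := proj_obtuse cX pP Xw.
have -> : z - w = (z - p) - (w - p) by apply/rowP => j; rewrite !mxE; ring.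
rewrite (sqnormB (z - p)) (sqnormBC p); have := sqnorm_ge0 (z - p); lra.
Qed.

Lemma avg_recr N (A w : vec) :
  N.+2%:R^-1 *: (A + w) =
  (N.+1%:R / N.+2%:R) *: (N.+1%:R^-1 *: A) + (1 - N.+1%:R / N.+2%:R) *: w.
Proof.
apply/rowP => j; rewrite !mxE; field.
by have := ler0n R N; rewrite !lt0r_neq0 //; lra.
Qed.

Lemma avg_weight_itv N : 0 <= (N.+1%:R / N.+2%:R : R) <= 1.
Proof. by rewrite divr_ge0 //= ler_pdivrMr ?ltr0n // mul1r ler_nat. Qed.

Lemma convex_set_avg X N (w : 'I_N -> vec) : convex_set_v X -> (0 < N)%N ->
  (forall i, X (w i)) -> X (N%:R^-1 *: \sum_i w i).
Proof.
move=> cX; case: N w => // N w _; elim: N w => [|N IH] w Xw.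
  by rewrite big_ord1 invr1 scale1r.
rewrite big_ord_recr /= avg_recr; apply: cX => //; last exact: avg_weight_itv.
by apply: IH => i; apply: Xw.
Qed.

Lemma convex_fun_avg f N (w : 'I_N -> vec) : convex_fun f -> (0 < N)%N ->
  f (N%:R^-1 *: \sum_i w i) <= N%:R^-1 * \sum_i f (w i).
Proof.
move=> cf; case: N w => // N w _; elim: N w => [|N IH] w.
  by rewrite !big_ord1 invr1 scale1r mul1r.
rewrite big_ord_recr /= avg_recr [X in _ <= _ * X]big_ord_recr /=.
have t01 := avg_weight_itv N; set t := _ / _ in t01 *.
apply: le_trans (cf _ _ _ t01) _.
set s := \sum_(i < N.+1) f _.
have -> : N.+2%:R^-1 * (s + f (w ord_max)) =
    t * (N.+1%:R^-1 * s) + (1 - t) * f (w ord_max).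
  by rewrite /t; field; have := ler0n R N; rewrite !lt0r_neq0 //; lra.
rewrite lerD2r ler_wpM2l ?IH //; by case/andP: t01.
Qed.

Lemma convex_fun_sum (J : finType) (fs : J -> vec -> R) :
  (forall i, convex_fun (fs i)) -> convex_fun (fun v => \sum_i fs i v).
Proof.
move=> cfs x y t t01; rewrite !mulr_sumr -big_split; apply: ler_sum => i _.
exact: cfs.
Qed.

Lemma convex_sqdist (D : vec) : convex_fun (fun v => sqnorm (v - D)).
Proof.
move=> x y t /andP[t0 t1] /=.
have -> : t *: x + (1 - t) *: y - D = t *: (x - D) + (1 - t) *: (y - D).
  by apply/rowP => j; rewrite !mxE; ring.
rewrite (sqnormD (t *: (x - D))) !sqnormZ dotvZl dotvZr.
have := dotv_le_sqnorm (x - D) (y - D); have : 0 <= t * (1 - t) by nra.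
nra.
Qed.

Lemma strongly_convex_convex mu f : 0 <= mu -> strongly_convex mu f -> convex_fun f.
Proof.
move=> mu0 sc x y t t01; apply: le_trans (sc x y t t01) _.
have := sqnorm_ge0 (x - y); move: t01 => /andP[t0 t1].
have : 0 <= mu / 2 * t * (1 - t) by rewrite !mulr_ge0 ?divr_ge0 //; lra.
nra.
Qed.

(* Strong convexity is used at the midpoint of [x] and [D]; hence [mu / 4]. *)
Lemma strongly_convex_subgrad mu f x h D : strongly_convex mu f -> subgrad f x h ->
  f x - f D + mu / 4 * sqnorm (x - D) <= dotv h (x - D).
Proof.
move=> sc sg.
have := sc D x (1/2) (ltac:(apply/andP; split; lra)).
have := sg ((1/2) *: D + (1 - 1/2) *: x).
have -> : (1/2) *: D + (1 - 1/2) *: x - x = (- (1/2)) *: (x - D).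
  by apply/rowP => j; rewrite !mxE; ring.
rewrite dotvZr (sqnormBC D); lra.
Qed.

End Convexity.

(** * Convex functions are bounded and Lipschitz on balls *)

Section ConvexOnBalls.
Variables (R : realType) (n : nat).
Notation vec := 'rV[R]_n.
Variable f : vec -> R.
Hypothesis cf : convex_fun f.

Lemma convex_le_max_seg (e : vec) (A t : R) : 0 < A -> `|t| <= A ->
  f (t *: e) <= Num.max (f (A *: e)) (f ((- A) *: e)).
Proof.
move=> A0; rewrite ler_norml => /andP[tA At].
set s := (t + A) / (2 * A).
have s01 : 0 <= s <= 1 by rewrite divr_ge0 /= ?ler_pdivrMr ?mul1r; lra.
have -> : t *: e = s *: (A *: e) + (1 - s) *: ((- A) *: e).
  by apply/rowP => j; rewrite !mxE /s; field; lra.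
apply: le_trans (cf (A *: e) ((- A) *: e) s01) _; case/andP: s01 => s0 s1.
set B := Num.max _ _.
have fA : f (A *: e) <= B by rewrite le_max lexx.
have fNA : f ((- A) *: e) <= B by rewrite le_max lexx orbT.
nra.
Qed.

(* [v] is the midpoint of [2 *: v'], which keeps its first [k] coordinates,
   and of a point on the [k]-th axis; so the radius doubles at each step. *)
Lemma convex_ub_coord k : (k <= n)%N -> forall M : R, 0 < M ->
  exists B, forall v : vec, (forall j : 'I_n, (k <= j)%N -> v ord0 j = 0) ->
    `|v| <= M -> f v <= B.
Proof.
elim: k => [_ M _|k IH lt_kn M M0].
  exists (f 0) => v v0 _; suff -> : v = 0 by [].
  by apply/rowP => j; rewrite mxE v0.
have [B1 HB1] := IH (ltnW lt_kn) (2 * M) (ltac:(lra)).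
pose jk : 'I_n := Ordinal lt_kn.
pose e : vec := delta_mx 0 jk.
set B2 := Num.max (f ((2 * M) *: e)) (f ((- (2 * M)) *: e)).
exists ((B1 + B2) / 2) => v vk vM.
pose v' : vec := \row_j (if (j < k)%N then v ord0 j else 0).
have -> : v = (1/2) *: (2 *: v') + (1 - 1/2) *: ((2 * v ord0 jk) *: e).
  apply/rowP => j; rewrite !mxE eqxx /=.
  have [j_lt_k|k_lt_j|jE] := ltngtP j k.
  - have -> : (j == jk) = false by apply/eqP => jE; move: j_lt_k; rewrite jE ltnn.
    by rewrite /= mulr0n mulr0; field.
  - have -> : (j == jk) = false by apply/eqP => jE; move: k_lt_j; rewrite jE ltnn.
    by rewrite (vk _ k_lt_j) /=; field.
  - have -> : j = jk by apply: val_inj; rewrite /= jE.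
    by rewrite eqxx mulr1; field.
have half01 : 0 <= (1 / 2 : R) <= 1 by apply/andP; split; lra.
apply: le_trans (cf (2 *: v') ((2 * v ord0 jk) *: e) half01) _.
have le_B1 : f (2 *: v') <= B1.
  apply: HB1 => [j kj|]; first by rewrite !mxE ltnNge kj mulr0.
  apply: normr_rV_le => [|j]; first lra.
  rewrite !mxE normrM ger0_norm // ler_pM2l //.
  by case: ifP => _; [apply: le_trans (normr_coord_le v j) vM | rewrite normr0; lra].
have le_B2 : f ((2 * v ord0 jk) *: e) <= B2.
  apply: convex_le_max_seg; first lra.
  by rewrite normrM ger0_norm // ler_pM2l //; apply: le_trans (normr_coord_le v jk) vM.
lra.
Qed.

Lemma convex_ub_ball M : exists B, forall v : vec, `|v| <= M -> f v <= B.
Proof.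
have M0 : 0 < `|M| + 1 by have := normr_ge0 M; lra.
have [B HB] := convex_ub_coord (leqnn n) M0.
exists B => v vM; apply: HB => [j|]; first by rewrite leqNgt ltn_ord.
by apply: le_trans vM _; have := ler_norm M; lra.
Qed.

Lemma convex_lb_ball M : exists B, forall v : vec, `|v| <= M -> B <= f v.
Proof.
have [B HB] := convex_ub_ball M.
exists (2 * f 0 - B) => v vM.
have := cf v (- v) (ltac:(apply/andP; split; lra) : 0 <= (1 / 2 : R) <= 1).
have -> : (1/2) *: v + (1 - 1/2) *: (- v) = 0 by apply/rowP => j; rewrite !mxE; field.
have : f (- v) <= B by apply: HB; rewrite normrN.
lra.
Qed.

Lemma convex_lipschitz_of_bounds M Lo U :
  (forall v : vec, `|v| <= M + 1 -> Lo <= f v <= U) ->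
  forall x y : vec, `|x| <= M -> `|y| <= M -> f y - f x <= (U - Lo) * `|y - x|.
Proof.
move=> fb x y xM yM.
have [->|yx] := eqVneq y x; first by rewrite !subrr normr0 mulr0.
have d0 : 0 < `|y - x| by rewrite normr_gt0 subr_eq0.
set d := `|y - x| in d0 *.
(* [z] extends the segment from [x] through [y] by length [1] beyond [y]. *)
set z := y + d^-1 *: (y - x).
have zM : `|z| <= M + 1.
  apply: le_trans (ler_normD _ _) _.
  by rewrite normrZ ger0_norm ?invr_ge0 ?(ltW d0) // mulVf ?gt_eqF //; lra.
set s := d / (1 + d).
have s01 : 0 <= s <= 1 by rewrite divr_ge0 /= ?ler_pdivrMr ?mul1r; lra.
have sd : s <= d by rewrite ler_pdivrMr; nra.
have -> : y = s *: z + (1 - s) *: x by apply/rowP => j; rewrite !mxE /s; field; lra.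
apply: le_trans (lerB (cf z x s01) (lexx _)) _.
have /andP[Loz zU] := fb z zM.
have /andP[Lox xU] : Lo <= f x <= U by apply: fb; lra.
case/andP: s01 => s0 s1; nra.
Qed.

Lemma convex_lipschitz_ball M : exists2 L, 0 <= L &
  forall x y : vec, `|x| <= M -> `|y| <= M -> f y - f x <= L * `|y - x|.
Proof.
have [Lo HLo] := convex_lb_ball (M + 1).
have [U HU] := convex_ub_ball (M + 1).
exists (Num.max (U - Lo) 0) => [|x y xM yM]; first by rewrite le_max lexx orbT.
have fb v : `|v| <= M + 1 -> Lo <= f v <= U by move=> vM; rewrite HLo ?HU.
apply: le_trans (convex_lipschitz_of_bounds fb xM yM) _.
by rewrite ler_wpM2r // le_max lexx.
Qed.

End ConvexOnBalls.

Lemma subgrad_sqnorm_le (R : realType) (n : nat) (f : 'rV[R]_n -> R)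
    (y g : 'rV[R]_n) (L : R) :
  (forall v, `|v - y| <= 1 -> f v - f y <= L * `|v - y|) -> subgrad f y g ->
  sqnorm g <= n%:R * L ^+ 2.
Proof.
move=> fL sg.
have [->|g0] := eqVneq g 0; first by rewrite sqnorm0 mulr_ge0 ?ler0n ?sqr_ge0.
have d0 : 0 < `|g| by rewrite normr_gt0.
set d := `|g| in d0 *.
have dg : d ^+ 2 <= sqnorm g := sqr_normr_le_sqnorm g.
have := fL (y + d^-1 *: g); have := sg (y + d^-1 *: g).
rewrite [y + _]addrC addrK normrZ ger0_norm ?invr_ge0 ?(ltW d0) //.
rewrite mulVf ?gt_eqF // dotvZr.
rewrite -/(sqnorm g) => sgy /(_ (lexx _)); rewrite mulr1 => fdL.
have gL : sqnorm g <= L * d by rewrite -ler_pdivrMr // mulrC; lra.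
have dL : d <= L by nra.
apply: le_trans (sqnorm_le_sqr_normr g) _.
by rewrite ler_wpM2l // lerXn2r // nnegrE ?normr_ge0 //; lra.
Qed.

Lemma convex_ball_constant (R : realType) (n : nat) (f : 'rV[R]_n -> R) (B : R) :
  convex_fun f -> exists2 L, 0 <= L & forall L', L <= L' ->
    (forall u v, `|u| <= B -> `|v| <= B -> f v - f u <= L' * `|v - u|) /\
    (forall u gu, `|u| <= B -> subgrad f u gu -> sqnorm gu <= L').
Proof.
move=> cf; have [L L0 fL] := convex_lipschitz_ball cf (B + 1).
exists (Num.max L (n%:R * L ^+ 2)) => [|L']; first by rewrite le_max L0.
rewrite ge_max => /andP[LL' nLL'].
split=> [u v uB vB|u gu uB sg].
  apply: le_trans (fL _ _ _ _) (ler_wpM2r (normr_ge0 _) LL'); lra.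
apply: le_trans nLL'; apply: subgrad_sqnorm_le sg => v vu.
apply: fL; first lra.
have := ler_normD (v - u) u; rewrite subrK; lra.
Qed.

(** * The inner loop of one client *)

Section InnerLoop.
Variables (R : realType) (n : nat).
Notation vec := 'rV[R]_n.
Variables (X : set vec) (fs : nat -> vec -> R) (y g : nat -> vec) (x0 h D : vec).
Variables (gam c kap L G : R) (N : nat).
Hypotheses (cX : convex_set_v X) (Xx0 : X x0) (XD : X D).
Hypotheses (gam_ge0 : 0 <= gam) (c_ge0 : 0 <= c) (c_le : c <= kap * gam).
Hypotheses (hG : sqnorm h <= G) (y0 : y 0 = x0).
Hypothesis step : forall j, (j < N)%N ->
  subgrad (fs j) (y j) (g j) /\ is_proj X (y j - gam *: g j - c *: h) (y j.+1).
Hypothesis gG : forall j, (j < N)%N -> X (y j) -> sqnorm (g j) <= G.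
Hypothesis fsL : forall j, (j < N)%N -> X (y j) ->
  fs j x0 - fs j (y j) <= L * `|x0 - y j|.

Let beta := 2 * (1 + kap ^+ 2) * G * gam ^+ 2.
Let G_ge0 : 0 <= G := le_trans (sqnorm_ge0 h) hG.

Lemma inner_beta_ge0 : 0 <= beta.
Proof. by rewrite /beta !mulr_ge0 ?sqr_ge0 // addr_ge0 ?sqr_ge0. Qed.

Lemma inner_in_X j : (j <= N)%N -> X (y j).
Proof.
elim: j => [|j IH] jN; first by rewrite y0.
by have [_ []] := step jN.
Qed.

Lemma inner_sqr_c_le : c ^+ 2 <= kap ^+ 2 * gam ^+ 2.
Proof. by rewrite -exprMn lerXn2r ?nnegrE //; apply: le_trans c_le. Qed.

Lemma inner_move_le j : (j < N)%N -> sqnorm (gam *: g j + c *: h) <= beta.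
Proof.
move=> jN; have gjG := gG jN (inner_in_X (ltnW jN)).
apply: le_trans (sqnormD_le _ _) _; rewrite !sqnormZ /beta.
have := ler_wpM2l (sqr_ge0 gam) gjG.
have := le_trans (ler_wpM2l (sqr_ge0 c) hG) (ler_wpM2r G_ge0 inner_sqr_c_le).
lra.
Qed.

Lemma inner_step_le j : (j < N)%N -> sqnorm (y j.+1 - y j) <= beta.
Proof.
move=> jN; have [_ pj] := step jN.
apply: le_trans (proj_sqdist_le cX pj (inner_in_X (ltnW jN))) _.
have -> : y j - gam *: g j - c *: h - y j = - (gam *: g j + c *: h).
  by apply/rowP => k; rewrite !mxE; ring.
by rewrite sqnormN inner_move_le.
Qed.

(* Every step moves by at most [sqrt beta]; the crude factor [4 ^+ j] avoids
   square roots. *)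
Lemma inner_drift_le j : (j <= N)%N -> sqnorm (y j - x0) <= 4 ^+ j * beta.
Proof.
elim: j => [|j IH] jN; first by rewrite y0 subrr sqnorm0 mul1r inner_beta_ge0.
have -> : y j.+1 - x0 = (y j.+1 - y j) + (y j - x0) by rewrite addrA subrK.
apply: le_trans (sqnormD_le _ _) _.
have := IH (ltnW jN); have := inner_step_le jN; have := inner_beta_ge0.
have : 1 <= (4 : R) ^+ j by apply: exprn_ege1; lra.
rewrite [4 ^+ j.+1]exprS; nra.
Qed.

(* The subgradient of [fs j] is taken at the drifting point [y j], not at [x0];
   the Lipschitz bound and Young's inequality charge the difference to
   [2 * sqnorm (y j - x0)]. *)
Lemma inner_descent j : (j < N)%N ->
  sqnorm (y j.+1 - D) <= sqnorm (y j - D) - 2 * gam * (fs j x0 - fs j D)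
    - 2 * c * dotv h (x0 - D)
    + (gam ^+ 2 * L ^+ 2 + c ^+ 2 * G + beta + 2 * sqnorm (y j - x0)).
Proof.
move=> jN; have Xj := inner_in_X (ltnW jN); have [sg pj] := step jN.
apply: le_trans (proj_sqdist_le cX pj XD) _.
have -> : y j - gam *: g j - c *: h - D = (y j - D) - (gam *: g j + c *: h).
  by apply/rowP => k; rewrite !mxE; ring.
have hD : dotv h (y j - D) = dotv h (x0 - D) + dotv h (y j - x0).
  by rewrite -dotvDr [_ + (y j - x0)]addrC addrA subrK.
rewrite (sqnormB (y j - D)) (dotvDr (y j - D)) !dotvZr (dotvC _ (g j)) (dotvC _ h) hD.
have sgD : gam * (fs j (y j) - fs j D) <= gam * dotv (g j) (y j - D).
  by rewrite ler_wpM2l //; have := sg D; rewrite -opprB dotvNr; lra.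
have fsjL : 2 * gam * (fs j x0 - fs j (y j)) <= gam ^+ 2 * L ^+ 2 + sqnorm (y j - x0).
  have := ler_wpM2l gam_ge0 (fsL jN Xj).
  have := sqr_normr_le_sqnorm (y j - x0); rewrite -normrN opprB.
  have := sqr_ge0 (gam * L - `|x0 - y j|); nra.
have hyx := dotv_ge_sqnorm (c *: h) (y j - x0).
rewrite sqnormZ dotvZl in hyx.
have := ler_wpM2l (sqr_ge0 c) hG; have := inner_move_le jN.
lra.
Qed.

Let E := L ^+ 2 + (1 + kap ^+ 2) * G * (3 + 4 ^+ N.+1).

Lemma inner_error_le j : (j < N)%N ->
  gam ^+ 2 * L ^+ 2 + c ^+ 2 * G + beta + 2 * sqnorm (y j - x0) <= gam ^+ 2 * E.
Proof.
move=> jN; have dj := inner_drift_le (ltnW jN).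
have j4 : (4 : R) ^+ j <= 4 ^+ N by apply: ler_weXn2l; [lra | exact: ltnW].
have := ler_wpM2r inner_beta_ge0 j4.
have := ler_wpM2r G_ge0 inner_sqr_c_le.
have := mulr_ge0 (sqr_ge0 gam) G_ge0; have := mulr_ge0 (sqr_ge0 kap) G_ge0.
move: dj; rewrite /E /beta [4 ^+ N.+1]exprS; lra.
Qed.

Lemma inner_loop_le : sqnorm (y N - D) <= sqnorm (x0 - D)
  - 2 * gam * \sum_(j < N) (fs j x0 - fs j D) - 2 * N%:R * c * dotv h (x0 - D)
  + N%:R * (gam ^+ 2 * E).
Proof.
suff loop j : (j <= N)%N -> sqnorm (y j - D) <= sqnorm (x0 - D)
  - 2 * gam * \sum_(l < j) (fs l x0 - fs l D) - 2 * j%:R * c * dotv h (x0 - D)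
  + j%:R * (gam ^+ 2 * E) by exact: loop.
elim: j => [_|j IH jN]; first by rewrite y0 big_ord0; lra.
rewrite big_ord_recr /= -natr1.
have := inner_descent jN; have := inner_error_le jN; have := IH (ltnW jN).
lra.
Qed.

End InnerLoop.

(** * Sequences contracting towards a level *)

Section Contraction.
Variables (R : realType) (a t : nat -> R) (delta : R) (K : nat).
Hypotheses (delta_gt0 : 0 < delta) (t01 : forall k, (K <= k)%N -> 0 <= t k <= 1).
Hypothesis a_rec : forall k, (K <= k)%N -> a k.+1 <= (1 - t k) * a k + t k * delta.

Let P : R := Num.max (a K - delta) 0.

(* Since [(1 - t) (1 + T + t) <= 1 + T], the excess of [a] over [delta]
   decays at least like the inverse of the partial sums of [t]. *)
Lemma contraction_excess_le d :
  a (K + d)%N - delta <= P / (1 + \sum_(K <= j < K + d) t j).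
Proof.
have P0 : 0 <= P by rewrite le_max lexx orbT.
elim: d => [|d IH]; first by rewrite addn0 big_geq // addr0 divr1 le_max lexx.
have KKd : (K <= K + d)%N by apply: leq_addr.
rewrite addnS big_nat_recr //=.
have T0 : 0 <= \sum_(K <= j < K + d) t j.
  rewrite big_nat_cond sumr_ge0 // => j /andP[/andP[Kj _] _].
  by case/andP: (t01 Kj).
move: T0 IH; set T := \sum_(_ <= _ < _) _ => T0 IH.
have /andP[tk0 tk1] := t01 KKd; have ak := a_rec KKd.
move: tk0 tk1 ak; set tk := t (K + d)%N => tk0 tk1 ak.
apply: (@le_trans _ _ ((1 - tk) * (P / (1 + T)))).
  by have := ler_wpM2l (ltac:(lra) : 0 <= 1 - tk) IH; lra.
rewrite mulrA ler_pdivrMr; last lra.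
rewrite mulrAC ler_pdivlMr; last lra.
have : (1 - tk) * (1 + (T + tk)) <= 1 + T by nra.
by move/(ler_wpM2l P0); lra.
Qed.

Lemma contraction_eventually_le : series t @ \oo --> +oo ->
  \forall k \near \oo, a k <= 2 * delta.
Proof.
move=> /cvgryPge /(_ (P / delta + series t K)) [k0 _ hk0].
exists (maxn k0 K) => // k /=; rewrite geq_max => /andP[k0k Kk].
have := contraction_excess_le (k - K); rewrite subnKC //.
have := hk0 _ k0k; rewrite /series /= (big_cat_nat (leq0n K) Kk) /= [leLHS]addrC lerD2l.
move: (\sum_(K <= j < k) t j) => T PT.
have d0 := delta_gt0; have P0 : 0 <= P by rewrite le_max lexx orbT.
have T0 : 0 <= T by apply: le_trans PT; rewrite divr_ge0 // ltW.
have : P / (1 + T) <= delta.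
  rewrite ler_pdivrMr; last lra.
  by move: PT; rewrite ler_pdivrMr //; nra.
lra.
Qed.

End Contraction.

(** * Penalized lexicographic minimization on compact sets *)

Lemma compact_norm_le (R : realType) (V : normedModType R) (X : set V) :
  compact X -> exists2 B, 0 <= B & forall z, X z -> `|z| <= B.
Proof.
move=> /compact_bounded [M [_ MX]]; exists (`|M| + 1) => [|z Xz].
  by have := normr_ge0 M; lra.
by apply: MX Xz; have := ler_norm M; lra.
Qed.

Section LexicographicMinimum.
Variables (R : realType) (V : normedModType R) (X : set V) (F H : V -> R).
Variables (LF LH : R) (p : V).
Hypotheses (X_compact : compact X) (LF_ge0 : 0 <= LF) (LH_ge0 : 0 <= LH).
Hypotheses (F_lip : LF.-lipschitz_X F) (H_lip : LH.-lipschitz_X H).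
Hypotheses (Xp : X p) (p_minF : forall z, X z -> F p <= F z).
Hypothesis p_minH : forall z, X z -> F z <= F p -> H p <= H z.

Lemma lipschitz_le L (G : V -> R) u v : L.-lipschitz_X G -> X u -> X v ->
  G v <= G u + L * `|u - v|.
Proof.
move=> /(_ (u, v) (conj _ _)) /= Gle Xu Xv; have := Gle Xu Xv.
by rewrite ler_norml; lra.
Qed.

Lemma lipschitz_small_shift L (G : V -> R) u v eta : 0 <= L -> 0 < eta ->
  L.-lipschitz_X G -> X u -> X v -> `|u - v| < eta / (2 * (1 + L)) ->
  G v <= G u + eta / 2.
Proof.
move=> L0 eta0 Glip Xu Xv uv; apply: le_trans (lipschitz_le Glip Xu Xv) _.
rewrite lerD2l; apply: le_trans (ler_wpM2l L0 (ltW uv)) _.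
by rewrite mulrA ler_pdivrMr ?mulr_gt0 //; nra.
Qed.

(* Otherwise a cluster point of near-minimizers of [F] with [H]-values
   below [H p - eps] would contradict [p_minH]. *)
Lemma near_argmin_ge eps : 0 < eps -> exists2 delta, 0 < delta &
  forall z, X z -> F z <= F p + delta -> H p - eps <= H z.
Proof.
move=> eps_gt0; apply: contrapT => no_delta.
have bad k : exists z, [/\ X z, F z <= F p + k.+1%:R^-1 & H z < H p - eps].
  apply: contrapT => no_z; apply: no_delta; exists k.+1%:R^-1 => // z Xz Fz.
  by rewrite leNgt; apply/negP => Hz; apply: no_z; exists z.
have [w wP] := choice bad.
have [q [Xq clq]] : X `&` cluster (w @ \oo) !=set0.
  by apply: X_compact; exists 0%N => // k _; case: (wP k).
have near_q eta : 0 < eta -> F q <= F p + eta /\ H q < H p - eps + eta.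
  move=> eta_gt0; have eta2 : 0 < eta / 2 by rewrite divr_gt0.
  pose A := [set z | [/\ X z, F z <= F p + eta / 2 & H z < H p - eps]].
  have wA : \forall k \near \oo, A (w k).
    near=> k; have [Xk Fk Hk] := wP k; split => //.
    apply: le_trans Fk _; rewrite lerD2l ltW //; near: k.
    exact: near_infty_natSinv_lt (PosNum eta2).
  pose r := eta / (2 * (1 + (LF + LH))).
  have LF0 := LF_ge0; have LH0 := LH_ge0.
  have r_gt0 : 0 < r by rewrite divr_gt0 //; lra.
  have [z [[Xz Fz Hz] qz]] := clq A _ wA (nbhsx_ballx q r r_gt0).
  move: qz; rewrite -ball_normE /= distrC => zq.
  have r_le L : 0 <= L -> L <= LF + LH -> `|z - q| < eta / (2 * (1 + L)).
    move=> L0 LS; apply: lt_le_trans zq _.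
    by rewrite ler_wpM2l ?(ltW eta_gt0) // lef_pV2 ?posrE ?mulr_gt0 //; lra.
  have := lipschitz_small_shift LF0 eta_gt0 F_lip Xz Xq (r_le _ LF0 (ltac:(lra))).
  have := lipschitz_small_shift LH0 eta_gt0 H_lip Xz Xq (r_le _ LH0 (ltac:(lra))).
  lra.
have Fq : F q <= F p by apply/ler_addgt0Pr => e e0; exact: (near_q e e0).1.
have := p_minH Xq Fq; have := (near_q _ eps_gt0).2; lra.
Unshelve. all: by end_near. Qed.

(* Where [F z] is close to [F p], [near_argmin_ge] controls [H z - H p];
   elsewhere the gap in [F] dominates [lam] times the oscillation of [H],
   which is bounded on the compact set [X]. *)
Lemma penalized_gap_ge eps : 0 < eps -> exists2 lam0, 0 < lam0 &
  forall lam z, 0 < lam <= lam0 -> X z ->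
    - (lam * eps) <= F z - F p + lam * (H z - H p).
Proof.
move=> eps_gt0; have [delta delta_gt0 near_min] := near_argmin_ge eps_gt0.
have [B B0 XB] := compact_norm_le X_compact.
have LH0 := LH_ge0; set D0 := LH * (2 * B) + 1.
have D0_gt0 : 0 < D0 by rewrite /D0; have := mulr_ge0 LH0 B0; lra.
have H_lb z : X z -> - D0 <= H z - H p.
  move=> Xz; have := lipschitz_le H_lip Xz Xp.
  have : `|z - p| <= 2 * B.
    by apply: le_trans (ler_normB _ _) _; have := XB z Xz; have := XB p Xp; lra.
  move=> /(ler_wpM2l LH0); rewrite /D0; lra.
exists (delta / D0) => [|lam z /andP[lam_gt0 lam_le] Xz]; first exact: divr_gt0.
have := ler_wpM2l (ltW lam_gt0) (H_lb z Xz); have := p_minF Xz.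
have [Fz|Fz] := lerP (F z) (F p + delta).
  have := ler_wpM2l (ltW lam_gt0) (near_min z Xz Fz); lra.
have : lam * D0 <= delta by rewrite -ler_pdivlMr.
have := mulr_ge0 (ltW lam_gt0) (ltW eps_gt0); lra.
Qed.

End LexicographicMinimum.

Lemma convex_lipschitz_on (R : realType) (n : nat) (X : set 'rV[R]_n)
    (f : 'rV[R]_n -> R) :
  compact X -> convex_fun f -> exists2 L, 0 <= L & L.-lipschitz_X f.
Proof.
move=> cX cf; have [B _ XB] := compact_norm_le cX.
have [L L0 fL] := convex_lipschitz_ball cf B.
exists L => // -[u v] [/= Xu Xv]; rewrite ler_norml.
have := fL _ _ (XB _ Xu) (XB _ Xv); have := fL _ _ (XB _ Xv) (XB _ Xu).
by rewrite distrC; lra.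
Qed.

(** * Convergence of FISM *)

Lemma finite_uniform_bound (R : realType) (J : finType) (P : J -> R -> Prop) :
  (forall j, exists2 c, 0 <= c & forall c', c <= c' -> P j c') ->
  exists2 c, 0 <= c & forall j c', c <= c' -> P j c'.
Proof.
move=> Pc; have /choice [c cP] :
    forall j, exists c, 0 <= c /\ forall c', c <= c' -> P j c'.
  by move=> j; have [c c0 Pjc] := Pc j; exists c.
exists (\big[Num.max/0]_j c j) => [|j c' cc']; first exact: bigmax_ge_id.
by apply: (cP j).2; apply: le_trans cc'; apply: le_bigmax.
Qed.

Section FISM.
Variables (R : realType) (n S : nat) (I : 'I_S -> nat).
Notation vec := 'rV[R]_n.
Variables (f : 'I_S -> nat -> vec -> R) (H : vec -> R) (muH : R).
Variables (X : set vec) (xH : vec) (gamma lambda : nat -> R).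
Variables (x Hk : nat -> vec) (g y : nat -> 'I_S -> nat -> vec).

Let m := (\sum_(i < S) I i)%N.
Let F (v : vec) := \sum_(i < S) \sum_(j < I i) f i j v.

Hypotheses (S_gt0 : (0 < S)%N) (I_gt0 : forall i, (0 < I i)%N).
Hypotheses (muH_gt0 : 0 < muH) (H_sc : strongly_convex muH H).
Hypothesis f_convex : forall i j, (j < I i)%N -> convex_fun (f i j).
Hypotheses (X_compact : compact X) (X_convex : convex_set_v X).
Hypothesis xH_sol : bilevel_solution X F H xH.
Hypotheses (gamma_gt0 : forall k, 0 < gamma k) (lambda_gt0 : forall k, 0 < lambda k).
Hypothesis lambda_noninc : forall k, lambda k.+1 <= lambda k.
Hypothesis gl_diverges : series (fun k => gamma k * lambda k) @ \oo --> +oo.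
Hypothesis gamma_over_lambda_to0 : (fun k => gamma k / lambda k) @ \oo --> 0.
Hypothesis lambda_to0 : lambda @ \oo --> 0.
(* The body of [FISM_sequence], for given witnesses [Hk], [g] and [y]. *)
Hypothesis fism_step : forall k,
  subgrad H (x k) (Hk k) /\ (forall i, y k i 0%N = x k) /\
  (forall i (j : nat), (j < I i)%N ->
     subgrad (f i j) (y k i j) (g k i j) /\
     is_proj X (y k i j - gamma k *: g k i j - (gamma k * lambda k / m%:R) *: Hk k)
       (y k i j.+1)) /\
  x k.+1 = S%:R^-1 *: \sum_(i < S) y k i (I i).

Lemma fism_in_X k : X (x k.+1).
Proof.
have [_ [_ [inner ->]]] := fism_step k.
apply: convex_set_avg X_convex S_gt0 _ => i.
rewrite -(prednK (I_gt0 i)).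
by have [_ []] := inner i (I i).-1 (ltac:(by rewrite ltn_predL)).
Qed.

Lemma I_le_m i : (I i <= m)%N.
Proof. by rewrite /m (bigD1 i) //= leq_addr. Qed.

Lemma m_gt0 : (0 < m)%N.
Proof. exact: leq_trans (I_gt0 (Ordinal S_gt0)) (I_le_m _). Qed.

Lemma fism_uniform_bounds B : exists2 L, 0 <= L &
  [/\ forall i j, (j < I i)%N -> forall u v, `|u| <= B -> `|v| <= B ->
        f i j v - f i j u <= L * `|v - u|,
      forall i j, (j < I i)%N -> forall u gu, `|u| <= B ->
        subgrad (f i j) u gu -> sqnorm gu <= L &
      forall u h, `|u| <= B -> subgrad H u h -> sqnorm h <= L].
Proof.
pose P (ij : 'I_S * 'I_m) (c : R) := (ij.2 < I ij.1)%N ->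
  (forall u v, `|u| <= B -> `|v| <= B -> f ij.1 ij.2 v - f ij.1 ij.2 u <= c * `|v - u|) /\
  (forall u gu, `|u| <= B -> subgrad (f ij.1 ij.2) u gu -> sqnorm gu <= c).
have [Lf Lf0 fL] : exists2 c, 0 <= c & forall ij c', c <= c' -> P ij c'.
  apply: finite_uniform_bound => -[i j]; rewrite /P /=.
  have [jI|] := ltnP j (I i); last by exists 0 => // c _; rewrite leqNgt => /negP.
  by have [c c0 fc] := convex_ball_constant B (f_convex jI); exists c => // c' /fc.
have [LH LH0 HL] := convex_ball_constant B (strongly_convex_convex (ltW muH_gt0) H_sc).
exists (Num.max Lf LH); first by rewrite le_max Lf0.
have LfL : Lf <= Num.max Lf LH by rewrite le_max lexx.
have LHL : LH <= Num.max Lf LH by rewrite le_max lexx orbT.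
split=> [i j jI|i j jI|]; last exact: (HL _ LHL).2.
  exact: (fL (i, Ordinal (leq_trans jI (I_le_m i))) _ LfL jI).1.
exact: (fL (i, Ordinal (leq_trans jI (I_le_m i))) _ LfL jI).2.
Qed.

Lemma lambda_le_lambda0 k : lambda k <= lambda 0.
Proof. by elim: k => // k; apply: le_trans. Qed.

Section DistanceRecursion.
Variables (B L : R).
Hypotheses (L_ge0 : 0 <= L) (XB : forall z, X z -> `|z| <= B).
Hypothesis f_lip : forall i j, (j < I i)%N -> forall u v, `|u| <= B -> `|v| <= B ->
  f i j v - f i j u <= L * `|v - u|.
Hypothesis f_subgrad : forall i j, (j < I i)%N -> forall u gu, `|u| <= B ->
  subgrad (f i j) u gu -> sqnorm gu <= L.
Hypothesis H_subgrad : forall u h, `|u| <= B -> subgrad H u h -> sqnorm h <= L.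

Let kap := lambda 0 / m%:R.
Let E := L ^+ 2 + (1 + kap ^+ 2) * L * (3 + 4 ^+ m.+1).

Lemma fism_client_le k i : X (x k) ->
  sqnorm (y k i (I i) - xH) <= sqnorm (x k - xH)
    - 2 * gamma k * \sum_(j < I i) (f i j (x k) - f i j xH)
    - 2 * (I i)%:R * (gamma k * lambda k / m%:R) * dotv (Hk k) (x k - xH)
    + (I i)%:R * (gamma k ^+ 2 * E).
Proof.
move=> Xk; have [Hsg [y0 [inner _]]] := fism_step k.
have mR : (0 : R) < m%:R by rewrite ltr0n m_gt0.
have gk0 := gamma_gt0 k; have lk0 := lambda_gt0 k.
have c_le : gamma k * lambda k / m%:R <= kap * gamma k.
  rewrite /kap [leRHS]mulrC mulrA ler_wpM2r ?invr_ge0 ?ler0n //.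
  by rewrite ler_wpM2l ?(ltW gk0) // lambda_le_lambda0.
apply: le_trans (inner_loop_le X_convex Xk xH_sol.1.1 (ltW gk0) _ c_le
  (H_subgrad (XB Xk) Hsg) (y0 i) (inner i)
  (fun j jI Xj => f_subgrad jI (XB Xj) (inner i j jI).1)
  (fun j jI Xj => f_lip jI (XB Xj) (XB Xk))) _.
  by rewrite divr_ge0 ?mulr_ge0 ?(ltW gk0) ?(ltW lk0) ?(ltW mR).
rewrite lerD2l ler_wpM2l // ler_wpM2l ?sqr_ge0 // lerD2l ler_wpM2l //.
  by rewrite mulr_ge0 // addr_ge0 ?sqr_ge0.
by rewrite lerD2l ler_weXn2l // ?ltnS ?I_le_m //; lra.
Qed.

Lemma fism_dist_le k : X (x k) ->
  sqnorm (x k.+1 - xH) <= sqnorm (x k - xH) - 2 * gamma k / S%:R * (F (x k) - F xH)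
    - 2 * gamma k * lambda k / S%:R * dotv (Hk k) (x k - xH)
    + gamma k ^+ 2 * (m%:R / S%:R * E).
Proof.
move=> Xk; have [_ [_ [_ ->]]] := fism_step k.
apply: le_trans (convex_fun_avg _ (convex_sqdist xH) S_gt0) _.
have SR : (0 : R) < S%:R by rewrite ltr0n.
have mR : (0 : R) < m%:R by rewrite ltr0n m_gt0.
have := ler_sum (index_enum _) (fun i (_ : true) => fism_client_le i Xk).
have S1_ge0 : 0 <= S%:R^-1 :> R by rewrite invr_ge0 ler0n.
move/(ler_wpM2l S1_ge0)/le_trans; apply.
set a := sqnorm _; set c := _ / m%:R; set P := dotv _ _; set Q := _ * E.
rewrite (eq_bigr (fun i => a + (- 2 * gamma k) * \sum_(j < I i) (f i j (x k) - f i j xH)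
  + (I i)%:R * (Q - 2 * c * P))) => [|i _]; last by ring.
rewrite !big_split /= sumr_const card_ord -!mulr_sumr -mulr_suml -natr_sum -/m.
under eq_bigr do rewrite sumrB.
rewrite sumrB -/(F (x k)) -/(F xH) /c /Q le_eqVlt; apply/orP; left; apply/eqP.
by field; rewrite !lt0r_neq0.
Qed.

End DistanceRecursion.

Lemma fism_dist_recursion : exists2 C, 0 <= C & forall k, X (x k) ->
  sqnorm (x k.+1 - xH) <= sqnorm (x k - xH) - 2 * gamma k / S%:R * (F (x k) - F xH)
    - 2 * gamma k * lambda k / S%:R * dotv (Hk k) (x k - xH) + gamma k ^+ 2 * C.
Proof.
have [B _ XB] := compact_norm_le X_compact.
have [L L0 [f_lip f_subgrad H_subgrad]] := fism_uniform_bounds B.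
eexists; last exact: fism_dist_le L0 XB f_lip f_subgrad H_subgrad.
rewrite mulr_ge0 ?divr_ge0 ?addr_ge0 ?sqr_ge0 //.
by rewrite !mulr_ge0 ?addr_ge0 ?sqr_ge0 ?exprn_ge0.
Qed.

Let t k := muH * gamma k * lambda k / (2 * S%:R).

Lemma fism_penalized_gap eps : 0 < eps -> \forall k \near \oo, forall z, X z ->
  - (lambda k * eps) <= F z - F xH + lambda k * (H z - H xH).
Proof.
move=> eps_gt0; have [[XxH F_min] H_min] := xH_sol.
have F_convex : convex_fun F.
  by apply: convex_fun_sum => i; apply: convex_fun_sum => j; apply: f_convex.
have H_convex := strongly_convex_convex (ltW muH_gt0) H_sc.
have [LF LF0 F_lip] := convex_lipschitz_on X_compact F_convex.
have [LH LH0 H_lip] := convex_lipschitz_on X_compact H_convex.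
have H_min' z : X z -> F z <= F xH -> H xH <= H z.
  by move=> Xz Fz; apply: H_min; split => // w Xw; apply: le_trans Fz (F_min w Xw).
have [lam0 lam0_gt0 gap] :=
  penalized_gap_ge X_compact LF0 LH0 F_lip H_lip XxH F_min H_min' eps_gt0.
near=> k => z Xz; apply: gap Xz; rewrite lambda_gt0 /=.
by near: k; exact: cvgr_le lambda_to0 _ lam0_gt0.
Unshelve. all: by end_near. Qed.

Lemma fism_rate_le1 : \forall k \near \oo, 0 <= t k <= 1.
Proof.
have mu0 := muH_gt0; have SR : (0 : R) < S%:R by rewrite ltr0n.
have tmax_gt0 : 0 < 2 * S%:R / muH by rewrite divr_gt0 //; lra.
near=> k; have lk0 := lambda_gt0 k; have gk0 := gamma_gt0 k.
have lam_le1 : lambda k <= 1 by near: k; exact: cvgr_le lambda_to0 _ ltr01.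
have lam_tmax : lambda k <= 2 * S%:R / muH.
  by near: k; exact: cvgr_le lambda_to0 _ tmax_gt0.
have gam_lam : gamma k <= lambda k.
  rewrite -[lambda k]mul1r -ler_pdivrMr //.
  by near: k; exact: cvgr_le gamma_over_lambda_to0 _ ltr01.
rewrite divr_ge0 ?mulr_ge0 ?ler0n ?(ltW mu0) ?(ltW gk0) ?(ltW lk0) //=.
rewrite ler_pdivrMr ?mul1r; last lra.
have := ler_wpM2l (ltW mu0) (ler_wpM2r (ltW lk0) gam_lam).
move: lam_tmax; rewrite ler_pdivlMr //; nra.
Unshelve. all: by end_near. Qed.

(* [gamma k / lambda k -> 0] makes the [O (gamma k ^+ 2)] noise negligible
   with respect to the rate [t k]. *)
Lemma fism_noise_le C eta : 0 <= C -> 0 < eta ->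
  \forall k \near \oo, gamma k ^+ 2 * C <= t k * eta.
Proof.
move=> C0 eta_gt0; have SR : (0 : R) < S%:R by rewrite ltr0n.
pose rho := muH * eta / (2 * S%:R) / (C + 1).
have rho_gt0 : 0 < rho by rewrite !divr_gt0 ?mulr_gt0 //; lra.
have rhoC : rho * C <= muH * eta / (2 * S%:R).
  have C1 : C + 1 != 0 by rewrite lt0r_neq0 //; lra.
  by rewrite -(divfK C1 (muH * eta / _)) -/rho; lra.
near=> k; have gk0 := gamma_gt0 k; have lk0 := lambda_gt0 k.
have gam_rho : gamma k <= rho * lambda k.
  by rewrite -ler_pdivrMr //; near: k; exact: cvgr_le gamma_over_lambda_to0 _ rho_gt0.
have := ler_wpM2r C0 (ler_wpM2l (ltW gk0) gam_rho).
have := ler_wpM2l (mulr_ge0 (ltW gk0) (ltW lk0)) rhoC.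
rewrite /t !invfM; clearbody rho; lra.
Unshelve. all: by end_near. Qed.

(* With [eps := muH * eta / 16] the penalty error and the noise each cost at
   most [t k * eta / 4]. *)
Lemma fism_contraction eta : 0 < eta -> \forall k \near \oo, 0 <= t k <= 1 /\
  sqnorm (x k.+1 - xH) <= (1 - t k) * sqnorm (x k - xH) + t k * (eta / 2).
Proof.
move=> eta_gt0; have [C C0 dist_le] := fism_dist_recursion.
have eps_gt0 : 0 < muH * eta / 16 by rewrite divr_gt0 ?mulr_gt0.
have eta4_gt0 : 0 < eta / 4 by rewrite divr_gt0.
near=> k; have gk0 := gamma_gt0 k; have lk0 := lambda_gt0 k.
have Xk : X (x k) by near: k; exists 1%N => // -[|k] //= _; exact: fism_in_X.
split; first by near: k; exact: fism_rate_le1.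
have w1 : 0 <= 2 * gamma k * lambda k / S%:R.
  by rewrite divr_ge0 ?ler0n // !mulr_ge0 // ltW.
have w2 : 0 <= 2 * gamma k / S%:R by rewrite divr_ge0 ?ler0n // mulr_ge0 // ltW.
have [Hsg _] := fism_step k.
have gap : forall z, X z -> - (lambda k * (muH * eta / 16)) <=
    F z - F xH + lambda k * (H z - H xH).
  by near: k; exact: fism_penalized_gap.
have noise : gamma k ^+ 2 * C <= t k * (eta / 4).
  by near: k; exact: fism_noise_le.
have := ler_wpM2l w1 (strongly_convex_subgrad xH H_sc Hsg).
have := ler_wpM2l w2 (gap _ Xk).
have := dist_le k Xk; rewrite /t !invfM in noise *; lra.
Unshelve. all: by end_near. Qed.

Lemma fism_steps_diverge : series t @ \oo --> +oo.
Proof.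
have c_gt0 : 0 < muH / (2 * S%:R) by rewrite divr_gt0 ?mulr_gt0 ?ltr0n.
apply/cvgryPge => A; apply: filterS ((cvgryPge _).1 gl_diverges (A / (muH / (2 * S%:R)))).
move=> k; rewrite ler_pdivrMr // mulrC /series /= mulr_sumr.
suff -> : \sum_(0 <= i < k) muH / (2 * S%:R) * (gamma i * lambda i) =
  \sum_(0 <= i < k) t i by [].
by apply: eq_bigr => i _; rewrite /t; ring.
Qed.

Lemma fism_sqdist_vanishes eta : 0 < eta ->
  \forall k \near \oo, sqnorm (x k - xH) <= eta.
Proof.
move=> eta_gt0; have [K _ contract] := fism_contraction eta_gt0.
have eta2 : 0 < eta / 2 by rewrite divr_gt0.
apply: filterS (contraction_eventually_le eta2 (fun k Kk => (contract k Kk).1)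
  (fun k Kk => (contract k Kk).2) fism_steps_diverge) => k.
by rewrite mulrC divfK ?pnatr_eq0.
Qed.

Lemma fism_cvg : x @ \oo --> xH.
Proof. exact: cvg_sqnorm_to0 fism_sqdist_vanishes. Qed.

End FISM.

Theorem theorem1 (R : realType) (n S : nat) (I : 'I_S -> nat)
    (H : 'rV[R]_n -> R) (muH : R) (f : 'I_S -> nat -> 'rV[R]_n -> R)
    (X : set 'rV[R]_n) (xH : 'rV[R]_n)
    (gamma lambda : nat -> R) (x : nat -> 'rV[R]_n) :
  (0 < S)%N -> (forall i, (0 < I i)%N) ->
  0 < muH -> strongly_convex muH H ->
  (forall i (j : nat), (j < I i)%N -> convex_fun (f i j)) ->
  X !=set0 -> compact X -> convex_set_v X ->
  bilevel_solution X (fun y => \sum_(i < S) \sum_(j < I i) f i j y) H xH ->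
  (* (i) *)
  (forall k, 0 < gamma k) -> (forall k, 0 < lambda k) ->
  (forall k, gamma k.+1 <= gamma k) -> (forall k, lambda k.+1 <= lambda k) ->
  gamma 0%N * lambda 0%N * muH <= 2 * (\sum_(i < S) I i)%:R ->
  (* (ii) *)
  series (fun k => gamma k * lambda k) @ \oo --> +oo ->
  cvgn (series (fun k => (gamma k.+1 * lambda k.+1)^-1
                          * (1 - lambda k / lambda k.+1) ^+ 2)) ->
  cvgn (series (fun k => gamma k ^+ 2)) ->
  (* (iii) *)
  (fun k => (gamma k.+1 ^+ 2 * lambda k.+1 ^+ 2)^-1
             * (1 - lambda k / lambda k.+1) ^+ 2) @ \oo --> 0 ->
  (fun k => gamma k / lambda k) @ \oo --> 0 ->
  lambda @ \oo --> 0 ->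
  FISM_sequence I f H X gamma lambda x ->
  x @ \oo --> xH.
Proof.
(* [X] is nonempty as it contains [xH]. *)
move=> S_gt0 I_gt0 muH_gt0 H_sc f_convex _ X_compact X_convex xH_sol.
move=> gamma_gt0 lambda_gt0 _ lambda_noninc _ gl_diverges _ _ _ gl_to0 lambda_to0.
move=> [Hk [g [y fism_step]]].
exact: fism_cvg S_gt0 I_gt0 muH_gt0 H_sc f_convex X_compact X_convex xH_sol
  gamma_gt0 lambda_gt0 lambda_noninc gl_diverges gl_to0 lambda_to0 fism_step.
Qed.
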